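(* There do not exist primes $p, q$ and positive integers $x, y, z$ such that \[ x^3 - 1 = p^3 y^2 \quad \text{and} \quad x^3 + 1 = q^3 z^2 . \] Equivalently, there are no three consecutive powerful numbers of the form $x^3 - 1 = p^3 y^2$, $x^3$, $x^3 + 1 = q^3 z^2$ with $p, q$ prime and $x, y, z$ positive integers.
   Context: A positive integer $n$ is called powerful if $p^2 \mid n$ for every prime $p$ dividing $n$. *)

From mathcomp Require Import all_boot.

From mathcomp Require Import all_boot zify ring.

Set Implicit Arguments.
Unset Strict Implicit.
Unset Printing Implicit Defensive.

(* Write x = a + 1. Then x^3 - 1 = a (a^2 + 3a + 3) and
   x^3 + 1 = (a + 2) (a^2 + a + 1), and in each product the two factors have
   no common prime other than 3. When a prime power times a square splits into
   such factors, the prime misses one of them, which is therefore a square or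
   three times a square. As a^2 + 3a + 3 and a^2 + a + 1 lie strictly between
   consecutive squares, either 3 | a or a is a square, and either 3 | a + 2 or
   a + 2 is a square; so 3 | a is impossible modulo 3. If a = s^2, the
   factorisation a^2 + a + 1 = (s^2 + s + 1) (s^2 - s + 1) splits x^3 + 1 into
   three such factors, two of which must be three times a square. The last two
   cannot both be, being coprime, and s^2 + 2 paired with s^2 + s + 1 or
   s^2 - s + 1 gives two numbers 3 u^2 < 3 w^2 with 3 w^2 - 3 u^2 < 6 u + 3,
   which is impossible. *)

Definition square_upto (l n : nat) :=
  forall r, prime r -> r != l -> ~~ odd (logn r n).

Definition coprime_upto (l a b : nat) :=
  forall r, prime r -> r %| a -> r %| b -> r = l.

Lemma even_logn_square n :
  0 < n -> (forall p, prime p -> ~~ odd (logn p n)) -> exists m, n = m ^ 2.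
Proof.
move=> n0 ev; exists (\prod_(0 <= p < n.+1) p ^ (logn p n)./2).
rewrite -mulnn -big_split /= -[LHS](partnT n0) /partn big_mkcond /=.
apply: eq_bigr => p _; rewrite -expnD addnn halfK.
have [pp|npp] := boolP (prime p); first by rewrite (negbTE (ev p pp)) subn0.
by rewrite lognE (negbTE npp).
Qed.

Lemma square_upto_cases l n :
  prime l -> 0 < n -> square_upto l n -> exists m, n = m ^ 2 \/ n = l * m ^ 2.
Proof.
move=> pl n0 sn.
have even_off_l r : prime r -> r != l -> ~~ odd (logn r (l * n)).
  by move=> pr rl; rewrite lognM ?(prime_gt0 pl) // logn_prime // (negbTE rl) sn.
have [odd_l|even_l] := boolP (odd (logn l n)); last first.
  have [m ->] : exists m, n = m ^ 2.
    by apply: even_logn_square => // r pr; case: (eqVneq r l) => [->|]; auto.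
  by exists m; left.
have [k Ek] : exists k, l * n = k ^ 2.
  apply: even_logn_square => [|r pr]; first by rewrite muln_gt0 prime_gt0.
  case: (eqVneq r l) => [->|]; last exact: even_off_l.
  by rewrite lognM ?(prime_gt0 pl) // logn_prime // eqxx add1n /= odd_l.
have : l %| k ^ 2 by rewrite -Ek dvdn_mulr.
rewrite Euclid_dvdX // andbT => /dvdnP[m km].
exists m; right; apply/eqP; rewrite -(eqn_pmul2l (prime_gt0 pl)) Ek km.
by apply/eqP; ring.
Qed.

Lemma square_upto_between l n m :
  prime l -> square_upto l n -> m ^ 2 < n < m.+1 ^ 2 -> exists k, n = l * k ^ 2.
Proof.
move=> pl sn /andP[lo hi].
have [k [nk|nk]] := square_upto_cases pl (leq_ltn_trans (leq0n _) lo) sn.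
  by move: lo hi; rewrite nk !ltn_sqr; lia.
by exists k.
Qed.

Lemma coprime_uptoC l a b : coprime_upto l a b -> coprime_upto l b a.
Proof. by move=> lab r pr rb ra; apply: lab. Qed.

Lemma coprime_upto_dvdr l a b c :
  c %| b -> coprime_upto l a b -> coprime_upto l a c.
Proof. by move=> cb lab r pr ra rc; apply: lab (dvdn_trans rc cb). Qed.

Lemma coprime_uptoMr l a b c :
  coprime_upto l a b -> coprime_upto l a c -> coprime_upto l a (b * c).
Proof.
by move=> lab lac r pr ra; rewrite Euclid_dvdM // => /orP[]; [apply: lab | apply: lac].
Qed.

Lemma coprime_upto_mulD l a k : prime l -> coprime_upto l a (k * a + l).
Proof.
move=> pl r pr ra; rewrite dvdn_addr ?dvdn_mull //.
by rewrite dvdn_prime2 // => /eqP.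
Qed.

Lemma coprime_coprime_upto l a b : coprime a b -> coprime_upto l a b.
Proof.
move=> cab r pr ra rb; have : r %| gcdn a b by rewrite dvdn_gcd ra rb.
by rewrite (eqP cab) dvdn1 => /eqP r1; rewrite r1 in pr.
Qed.

Lemma coprime_upto_dvd_one l a b p : prime p ->
  coprime_upto l a b -> (p %| a -> p = l) \/ (p %| b -> p = l).
Proof.
move=> pp lab; case pa: (p %| a); last by left.
by right; apply: lab pa.
Qed.

Lemma square_upto_factor l p e a b y :
  prime p -> 0 < a * b -> coprime_upto l a b -> a * b = p ^ e * y ^ 2 ->
  (p %| a -> p = l) -> square_upto l a.
Proof.
move=> pp ab0 lab E pa r pr rl.
have [ra|nra] := boolP (r %| a); last by rewrite logn_coprime ?prime_coprime.
have rp : r != p by apply: contra_neq rl => rp; rewrite rp; apply: pa; rewrite -rp.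
have rb : ~~ (r %| b) by apply: contra rl => rb; rewrite (lab r pr ra rb).
have [a0 b0] : 0 < a /\ 0 < b by apply/andP; rewrite -muln_gt0.
have y0 : 0 < y by move: ab0; rewrite E muln_gt0 => /andP[_]; rewrite expn_gt0 orbF.
have pe0 : 0 < p ^ e by rewrite expn_gt0 prime_gt0.
have y20 : 0 < y ^ 2 by rewrite expn_gt0 y0.
have := congr1 (logn r) E.
rewrite (lognM _ a0 b0) (lognM _ pe0 y20) !lognX (logn_prime r pp).
rewrite (negbTE rp) muln0 add0n [logn r b]logn_coprime ?prime_coprime // addn0.
by move=> ->; rewrite oddM.
Qed.

Lemma square_upto_two_factors l p e a b y :
  prime p -> 0 < a * b -> coprime_upto l a b -> a * b = p ^ e * y ^ 2 ->
  square_upto l a \/ square_upto l b.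
Proof.
move=> pp ab0 lab E; case: (coprime_upto_dvd_one pp lab) => pl.
  by left; apply: square_upto_factor E pl.
right; apply: (square_upto_factor pp _ (coprime_uptoC lab) _ pl); rewrite mulnC //.
exact: E.
Qed.

Lemma square_upto_three_factors l p e a b c y :
  prime p -> 0 < a * b * c ->
  coprime_upto l a b -> coprime_upto l a c -> coprime_upto l b c ->
  a * b * c = p ^ e * y ^ 2 ->
  [\/ square_upto l a /\ square_upto l b, square_upto l a /\ square_upto l c
    | square_upto l b /\ square_upto l c].
Proof.
move=> pp abc0 lab lac lbc E.
have sa : (p %| a -> p = l) -> square_upto l a.
  apply: (square_upto_factor (b := b * c) (e := e) (y := y) pp).
  - by rewrite mulnA.
  - exact: coprime_uptoMr.
  - by rewrite mulnA.
have sb : (p %| b -> p = l) -> square_upto l b.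
  apply: (square_upto_factor (b := a * c) (e := e) (y := y) pp).
  - by rewrite mulnCA mulnA.
  - exact: coprime_uptoMr (coprime_uptoC lab) lbc.
  - by rewrite mulnCA mulnA.
have sc : (p %| c -> p = l) -> square_upto l c.
  apply: (square_upto_factor (b := a * b) (e := e) (y := y) pp).
  - by rewrite mulnC.
  - exact: coprime_uptoMr (coprime_uptoC lac) (coprime_uptoC lbc).
  - by rewrite mulnC.
case: (coprime_upto_dvd_one pp lab) => h_ab;
  case: (coprime_upto_dvd_one pp lac) => h_ac;
  case: (coprime_upto_dvd_one pp lbc) => h_bc;
  by [apply: Or31; split; auto | apply: Or32; split; auto | apply: Or33; split; auto].
Qed.

Lemma factor_dvd_or_square l p e a b y m :
  prime l -> prime p -> 0 < a -> coprime_upto l a b -> a * b = p ^ e * y ^ 2 ->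
  m ^ 2 < b < m.+1 ^ 2 -> (l %| b -> l %| a) -> l %| a \/ exists k, a = k ^ 2.
Proof.
move=> pl pp a0 lab E bm ba.
have b0 : 0 < b by case/andP: bm => /(leq_ltn_trans (leq0n _)).
have ab0 : 0 < a * b by rewrite muln_gt0 a0 b0.
have [sa|sb] := square_upto_two_factors pp ab0 lab E.
  have [k [->|->]] := square_upto_cases pl a0 sa; last by left; apply: dvdn_mulr.
  by right; exists k.
have [k bk] := square_upto_between pl sb bm.
by left; apply: ba; rewrite bk dvdn_mulr.
Qed.

Lemma sqr_mod3 k : k ^ 2 %% 3 != 2.
Proof.
rewrite -modnXm; have : k %% 3 < 3 by rewrite ltn_mod.
by case: (k %% 3) => [|[|[|]]].
Qed.

Lemma thrice_sqr_gap u w d : 0 < d -> 3 * u ^ 2 + d = 3 * w ^ 2 -> 6 * u + 3 <= d.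
Proof.
move=> d0 E; have : u.+1 ^ 2 <= w ^ 2.
  by rewrite leq_sqr -ltn_sqr -(ltn_pmul2l (isT : 0 < 3)) -E; lia.
nia.
Qed.

Lemma coprime_upto3_cube_add1_factors a : 0 < a -> coprime_upto 3 (a + 2) (a ^ 2 + a + 1).
Proof.
move=> a0; have -> : a ^ 2 + a + 1 = (a - 1) * (a + 2) + 3 by nia.
exact: coprime_upto_mulD.
Qed.

Lemma coprime_trinomials t : coprime (t ^ 2 + 3 * t + 3) (t ^ 2 + t + 1).
Proof.
have -> : t ^ 2 + 3 * t + 3 = 2 * t.+1 + (t ^ 2 + t + 1) by ring.
rewrite coprime_sym /coprime gcdnDr -/(coprime _ _) coprimeMr coprimen2.
have -> : t ^ 2 + t + 1 = t * t.+1 + 1 by ring.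
by rewrite oddD oddM /= andbN coprime_sym /coprime gcdnMDl gcdn1.
Qed.

Lemma cube_sub1_dvd3_or_square p e y a :
  prime p -> 0 < a -> a.+1 ^ 3 - 1 = p ^ e * y ^ 2 -> 3 %| a \/ exists k, a = k ^ 2.
Proof.
move=> pp a0 E.
have {}E : a * (a ^ 2 + 3 * a + 3) = p ^ e * y ^ 2 by rewrite -E; nia.
apply: (factor_dvd_or_square (m := a.+1) (isT : prime 3) pp a0 _ E).
- rewrite (_ : a ^ 2 + 3 * a + 3 = (a + 3) * a + 3); last by ring.
  exact: coprime_upto_mulD.
- lia.
- rewrite (_ : a ^ 2 + 3 * a + 3 = a * a + 3 * (a + 1)); last by ring.
  by rewrite (dvdn_addl _ (dvdn_mulr _ (dvdnn 3))) Euclid_dvdM // orbb.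
Qed.

Lemma cube_add1_ndvd3 q e z a :
  prime q -> 0 < a -> a.+1 ^ 3 + 1 = q ^ e * z ^ 2 -> ~~ (3 %| a).
Proof.
move=> pq a0 E; apply/negP => /dvdnP[j aj].
have {}E : (a + 2) * (a ^ 2 + a + 1) = q ^ e * z ^ 2 by rewrite -E; ring.
have [|[k Ek]] : 3 %| a + 2 \/ exists k, a + 2 = k ^ 2.
  apply: (factor_dvd_or_square (m := a) (isT : prime 3) pq _ _ E).
  - lia.
  - exact: coprime_upto3_cube_add1_factors.
  - nia.
  - rewrite (_ : a ^ 2 + a + 1 = (a + 1) * j * 3 + 1); last by rewrite aj; ring.
    by rewrite (dvdn_addr _ (dvdn_mull _ (dvdnn 3))).
- by rewrite aj (dvdn_addr _ (dvdn_mull _ (dvdnn 3))).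
- by move: (sqr_mod3 k); rewrite -Ek aj; lia.
Qed.

Lemma cube_add1_nsquare q e z s :
  prime q -> 1 < s -> (s ^ 2).+1 ^ 3 + 1 = q ^ e * z ^ 2 -> False.
Proof.
case: s => // t pq; rewrite ltnS => t0 E.
have lcD : coprime_upto 3 (t.+1 ^ 2 + 2) ((t.+1 ^ 2) ^ 2 + t.+1 ^ 2 + 1).
  by apply: coprime_upto3_cube_add1_factors; rewrite expn_gt0.
have D12 : (t.+1 ^ 2) ^ 2 + t.+1 ^ 2 + 1 = (t ^ 2 + 3 * t + 3) * (t ^ 2 + t + 1).
  by ring.
rewrite D12 in lcD.
have {}E : (t.+1 ^ 2 + 2) * (t ^ 2 + 3 * t + 3) * (t ^ 2 + t + 1) = q ^ e * z ^ 2.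
  by rewrite -E; ring.
have pos : 0 < (t.+1 ^ 2 + 2) * (t ^ 2 + 3 * t + 3) * (t ^ 2 + t + 1) by lia.
have thrice_c : square_upto 3 (t.+1 ^ 2 + 2) -> exists w, t.+1 ^ 2 + 2 = 3 * w ^ 2.
  by move=> sc; apply: (square_upto_between (m := t.+1)) => //; lia.
have thrice_1 : square_upto 3 (t ^ 2 + 3 * t + 3) ->
    exists u, t ^ 2 + 3 * t + 3 = 3 * u ^ 2.
  by move=> s1; apply: (square_upto_between (m := t.+1)) => //; lia.
have thrice_2 : square_upto 3 (t ^ 2 + t + 1) -> exists v, t ^ 2 + t + 1 = 3 * v ^ 2.
  by move=> s2; apply: (square_upto_between (m := t)) => //; nia.
have := square_upto_three_factors pq pos (coprime_upto_dvdr (dvdn_mulr _ (dvdnn _)) lcD)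
  (coprime_upto_dvdr (dvdn_mull _ (dvdnn _)) lcD)
  (coprime_coprime_upto 3 (coprime_trinomials t)) E.
case=> [[/thrice_c[w Ew] /thrice_1[u Eu]] | [/thrice_c[w Ew] /thrice_2[v Ev]]
       | [/thrice_1[u Eu] /thrice_2[v Ev]]].
- have := @thrice_sqr_gap w u t t0; nia.
- have := @thrice_sqr_gap v w t.+2 isT; nia.
- have : 3 %| gcdn (t ^ 2 + 3 * t + 3) (t ^ 2 + t + 1).
    by rewrite dvdn_gcd Eu Ev !dvdn_mulr.
  by rewrite (eqP (coprime_trinomials t)).
Qed.

Theorem theorem1 :
  ~ (exists p q x y z : nat,
       [/\ prime p, prime q, 0 < x, 0 < y & 0 < z] /\
       x ^ 3 - 1 = p ^ 3 * y ^ 2 /\ x ^ 3 + 1 = q ^ 3 * z ^ 2).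
Proof.
move=> [p [q [x [y [z [[pp pq x0 y0 z0] [E1 E2]]]]]]].
case: x x0 E1 E2 => // a _ E1 E2.
have a2 : 1 < a.
  have : 2 ^ 3 * 1 <= p ^ 3 * y ^ 2.
    by apply: leq_mul; rewrite ?leq_exp2r ?prime_gt1 ?expn_gt0 ?y0.
  by rewrite -E1; case: a {E1 E2} => [|[|]].
have a0 := ltnW a2.
case: (cube_sub1_dvd3_or_square pp a0 E1) => [a3 | [[|[|s]] ak]].
- by case/negP: (cube_add1_ndvd3 pq a0 E2).
- by move: a2; rewrite ak.
- by move: a2; rewrite ak.
- by move: E2; rewrite ak; apply: cube_add1_nsquare.
Qed.
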